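(* For $s\in\mathcal S^{2,2}$ write $V^n(s)=(x^{(n)},y^{(n)},u^{(n)},v^{(n)})$. Then: 1. $\frac{5}{12}\le x^{(2)}+y^{(2)}\le\frac12$ for every $s\in\mathcal S^{2,2}$; 2. there exists $\alpha\in(0,1)$ such that $v^{(n+1)}\le\alpha\,y^{(n)}$ for every $s\in\mathcal S^{2,2}$ and every $n\ge2$.
   Context: $\mathcal S^{2,2}=\{(x,y,u,v)\in\mathbb{R}^4: x,y,u,v\ge0,\ x+y+u+v=1,\ x+y>0,\ u+v>0\}$. $V:\mathcal S^{2,2}\to\mathcal S^{2,2}$ is $V(x,y,u,v)=(x',y',u',v')$ with $x'=\dfrac{2xu+yu}{4(x+y)(u+v)}$, $y'=\dfrac{6xv+3yu+4yv}{12(x+y)(u+v)}$, $u'=\dfrac{6xu+6xv+3yu+4yv}{12(x+y)(u+v)}$, $v'=\dfrac{3yu+4yv}{12(x+y)(u+v)}$. $V^n$ denotes the $n$-fold iterate. *)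

From Stdlib Require Import Reals.
Open Scope R_scope.

Record pt4 : Type := mk4 { px : R; py : R; pu : R; pv : R }.

Definition inS22 (s : pt4) : Prop :=
  0 <= px s /\ 0 <= py s /\ 0 <= pu s /\ 0 <= pv s /\
  px s + py s + pu s + pv s = 1 /\
  px s + py s > 0 /\ pu s + pv s > 0.

(* The evolution operator V (total function on R^4; only used on S^{2,2},
   where the denominators are nonzero). *)
Definition V (s : pt4) : pt4 :=
  let x := px s in let y := py s in let u := pu s in let v := pv s in
  let d := (x + y) * (u + v) in
  mk4 ((2 * x * u + y * u) / (4 * d))
      ((6 * x * v + 3 * y * u + 4 * y * v) / (12 * d))
      ((6 * x * u + 6 * x * v + 3 * y * u + 4 * y * v) / (12 * d))
      ((3 * y * u + 4 * y * v) / (12 * d)).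

Fixpoint Vn (n : nat) (s : pt4) : pt4 :=
  match n with
  | O => s
  | S k => V (Vn k s)
  end.

From Stdlib Require Import Reals Lra Psatz.
Open Scope R_scope.

(* Each quantity to be bounded differs from its bound by an explicit fraction
   over [(x + y) (u + v)] with visibly nonnegative numerator:
   [1/2 - (x' + y') = y v / (6 (x + y) (u + v))],
   [u' - v' = x / (2 (x + y))],
   [x' + y' - 5/12 = (x u + x v + y (u - v)) / (12 (x + y) (u + v))],
   [y / (3 (x + y)) - v' = y u / (12 (x + y) (u + v))].
   Hence [V] preserves the simplex and [v <= u], makes the mass [x + y] at most
   [1/2], at least [5/12] once [v <= u], and then [v' <= y / (3 (x + y)) <= 4/5 y]. *)

Lemma Rdiv_nonneg (a b : R) : 0 <= a -> 0 < b -> 0 <= a / b.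
Proof. intros Ha Hb; apply Rmult_le_pos; [exact Ha | left; apply Rinv_0_lt_compat, Hb]. Qed.

Lemma inS22_denom_pos (s : pt4) :
  inS22 s -> 0 < (px s + py s) * (pu s + pv s).
Proof. intros (_ & _ & _ & _ & _ & Hxy & Huv); nra. Qed.

Lemma V_mass_half_gap (s : pt4) : inS22 s ->
  1 / 2 - (px (V s) + py (V s))
  = py s * pv s / (6 * ((px s + py s) * (pu s + pv s))).
Proof.
  intros (_ & _ & _ & _ & _ & Hxy & Huv); unfold V; cbn; field; split; lra.
Qed.

Lemma V_pu_pv_gap (s : pt4) : inS22 s ->
  pu (V s) - pv (V s) = px s / (2 * (px s + py s)).
Proof.
  intros (_ & _ & _ & _ & _ & Hxy & Huv); unfold V; cbn; field; split; lra.
Qed.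

Lemma V_mass_5_12_gap (s : pt4) : inS22 s ->
  px (V s) + py (V s) - 5 / 12
  = (px s * pu s + px s * pv s + py s * (pu s - pv s))
    / (12 * ((px s + py s) * (pu s + pv s))).
Proof.
  intros (_ & _ & _ & _ & _ & Hxy & Huv); unfold V; cbn; field; split; lra.
Qed.

Lemma V_pv_gap (s : pt4) : inS22 s ->
  py s / (3 * (px s + py s)) - pv (V s)
  = py s * pu s / (12 * ((px s + py s) * (pu s + pv s))).
Proof.
  intros (_ & _ & _ & _ & _ & Hxy & Huv); unfold V; cbn; field; split; lra.
Qed.

Lemma V_mass_le_half (s : pt4) : inS22 s -> px (V s) + py (V s) <= 1 / 2.
Proof.
  intros Hs; pose proof (inS22_denom_pos s Hs) as Hd.
  assert (Hgap : 0 <= 1 / 2 - (px (V s) + py (V s))).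
  { rewrite (V_mass_half_gap s Hs); destruct Hs as (_ & Hy & _ & Hv & _).
    apply Rdiv_nonneg; nra. }
  lra.
Qed.

Lemma V_inS22 (s : pt4) : inS22 s -> inS22 (V s).
Proof.
  intros Hs; pose proof (inS22_denom_pos s Hs) as Hd.
  pose proof (V_mass_le_half s Hs) as Hhalf.
  destruct Hs as (Hx & Hy & Hu & Hv & _ & Hxy & Huv).
  assert (Hsum : px (V s) + py (V s) + pu (V s) + pv (V s) = 1).
  { unfold V; cbn; field; split; lra. }
  assert (Hmass : px (V s) + py (V s)
                  = (6 * px s * pu s + 6 * px s * pv s + 6 * py s * pu s
                     + 4 * py s * pv s) / (12 * ((px s + py s) * (pu s + pv s)))).
  { unfold V; cbn; field; split; lra. }
  assert (Hmass_pos : px (V s) + py (V s) > 0).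
  { rewrite Hmass; apply Rdiv_lt_0_compat; nra. }
  unfold inS22; repeat split; try lra; unfold V; cbn; apply Rdiv_nonneg; nra.
Qed.

Lemma V_pv_le_pu (s : pt4) : inS22 s -> pv (V s) <= pu (V s).
Proof.
  intros Hs; pose proof (V_pu_pv_gap s Hs) as Hgap.
  destruct Hs as (Hx & _ & _ & _ & _ & Hxy & _).
  assert (0 <= px s / (2 * (px s + py s))) by (apply Rdiv_nonneg; lra).
  lra.
Qed.

Lemma V_mass_ge_5_12 (s : pt4) :
  inS22 s -> pv s <= pu s -> 5 / 12 <= px (V s) + py (V s).
Proof.
  intros Hs Hvu; pose proof (inS22_denom_pos s Hs) as Hd.
  pose proof (V_mass_5_12_gap s Hs) as Hgap.
  destruct Hs as (Hx & Hy & Hu & Hv & _).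
  assert (0 <= (px s * pu s + px s * pv s + py s * (pu s - pv s))
               / (12 * ((px s + py s) * (pu s + pv s)))) by (apply Rdiv_nonneg; nra).
  lra.
Qed.

Lemma V_pv_le (s : pt4) :
  inS22 s -> 5 / 12 <= px s + py s -> pv (V s) <= 4 / 5 * py s.
Proof.
  intros Hs Hmass; pose proof (inS22_denom_pos s Hs) as Hd.
  pose proof (V_pv_gap s Hs) as Hgap.
  destruct Hs as (Hx & Hy & Hu & Hv & _).
  assert (0 <= py s * pu s / (12 * ((px s + py s) * (pu s + pv s))))
    by (apply Rdiv_nonneg; nra).
  assert (Hbound : py s / (3 * (px s + py s)) <= 4 / 5 * py s).
  { apply Rmult_le_reg_r with (3 * (px s + py s)); [lra |].
    unfold Rdiv; rewrite Rmult_assoc, Rinv_l; nra. }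
  lra.
Qed.

Lemma Vn_inS22 (n : nat) (s : pt4) : inS22 s -> inS22 (Vn n s).
Proof. intros Hs; induction n as [| n IH]; [exact Hs | exact (V_inS22 _ IH)]. Qed.

Lemma Vn_mass_bounds (n : nat) (s : pt4) : inS22 s -> (2 <= n)%nat ->
  5 / 12 <= px (Vn n s) + py (Vn n s) <= 1 / 2.
Proof.
  intros Hs Hn; destruct n as [| [| n]]; [lia | lia |].
  pose proof (Vn_inS22 n s Hs) as Hn0.
  pose proof (V_inS22 _ Hn0) as Hn1.
  split.
  - exact (V_mass_ge_5_12 _ Hn1 (V_pv_le_pu _ Hn0)).
  - exact (V_mass_le_half _ Hn1).
Qed.

Theorem lemma4p2 :
  (forall s : pt4, inS22 s ->
     5 / 12 <= px (Vn 2 s) + py (Vn 2 s) <= 1 / 2) /\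
  (exists alpha : R, 0 < alpha < 1 /\
     forall (s : pt4) (n : nat), inS22 s -> (2 <= n)%nat ->
       pv (Vn (S n) s) <= alpha * py (Vn n s)).
Proof.
  split.
  - intros s Hs; exact (Vn_mass_bounds 2 s Hs (le_n 2)).
  - exists (4 / 5); split; [lra |].
    intros s n Hs Hn.
    exact (V_pv_le _ (Vn_inS22 n s Hs) (proj1 (Vn_mass_bounds n s Hs Hn))).
Qed.
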